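(* Let $m\ge1$, $\xi\ge1$ an integer, $K_1,\dots,K_m>0$, and $\rho\in[0,1]$. The finite-population foraging Markov chain on $\mathcal S=\{\mathbf{x}\in\mathbb{Z}_{\ge0}^m:\sum_ix_i=\xi\}$ has all transition probabilities $A(\mathbf{x}\mid\mathbf{x}')$ strictly positive, and consequently it has a unique stationary distribution $\pi$, which satisfies $\pi(\mathbf{x})>0$ for all $\mathbf{x}\in\mathcal S$.
   Context: Let $\phi_i(u)=\frac{K_i}{K_i+u}$. The state $\mathbf{U}_n=(U_{1,n},\dots,U_{m,n})\in\mathcal S$ records how many of the $\xi$ foragers fly to site $i$ at time $n$. Given $\mathbf{U}_n=\mathbf{x}$, the numbers of successful foragers $V_{i,n}$ are independent with $V_{i,n}\sim\mathrm{Binomial}(x_i,\phi_i(x_i/\xi))$; let $R_n=\sum_iV_{i,n}$. If $R_n=0$ set $q_i=1/m$; otherwise $q_i=\rho\,V_{i,n}/R_n+(1-\rho)/m$. Then $\mathbf{U}_{n+1}-\mathbf{V}_n\sim\mathrm{Multinomial}(\xi-R_n,\mathbf{q})$, i.e. successful foragers return to their site and the $\xi-R_n$ unsuccessful ones are redistributed independently according to $\mathbf q$. $A(\mathbf{x}\mid\mathbf{x}')=\mathbb P[\mathbf{U}_{n+1}=\mathbf{x}\mid\mathbf{U}_n=\mathbf{x}']$. *)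

From HB Require Import structures.
From mathcomp Require Import all_boot all_order all_algebra.
From mathcomp Require Import reals.
Set Implicit Arguments. Unset Strict Implicit. Unset Printing Implicit Defensive.
Import Order.TTheory GRing.Theory Num.Theory.
Local Open Scope ring_scope.

Section Foraging.
Variable R : realType.

Definition phi (m : nat) (K : 'I_m -> R) (i : 'I_m) (u : R) : R := K i / (K i + u).

Definition binom_pmf (n k : nat) (p : R) : R :=
  ('C(n, k))%:R * p ^+ k * (1 - p) ^+ (n - k).

Definition multinom_pmf (m : nat) (n : nat) (q : 'I_m -> R) (k : 'I_m -> nat) : R :=
  if (\sum_i k i)%N == n then
    (n`!)%:R / (\prod_i (k i)`!)%:R * \prod_i q i ^+ k i
  else 0.

Definition redistrib (m : nat) (rho : R) (v : 'I_m -> nat) (i : 'I_m) : R :=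
  let Rn := (\sum_j v j)%N in
  if Rn == 0%N then 1 / m%:R
  else rho * (v i)%:R / Rn%:R + (1 - rho) / m%:R.

(* A(x | x') = P[U_{n+1} = x | U_n = x'] : sum over the vector V_n = v of
   successful foragers (v_i <= x'_i), of the product of independent binomial
   probabilities times the multinomial probability that U_{n+1} - v = x - v. *)
Definition trans (m xi : nat) (K : 'I_m -> R) (rho : R)
    (x x' : 'I_m -> nat) : R :=
  \sum_(v : {ffun 'I_m -> 'I_xi.+1} | [forall i, (v i <= x' i)%N && (v i <= x i)%N])
    ((\prod_i binom_pmf (x' i) (v i) (phi K i ((x' i)%:R / xi%:R))) *
     multinom_pmf (xi - \sum_i (v i : nat))%N
       (redistrib rho (fun i => nat_of_ord (v i))) (fun i => (x i - v i)%N)).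

End Foraging.

Definition state (m xi : nat) :=
  {x : {ffun 'I_m -> 'I_xi.+1} | (\sum_i (x i : nat))%N == xi}.

Definition stateval (m xi : nat) (x : state m xi) : 'I_m -> nat :=
  fun i => nat_of_ord (val x i).

Definition A (R : realType) (m xi : nat) (K : 'I_m -> R) (rho : R)
    (x x' : state m xi) : R :=
  @trans R m xi K rho (stateval x) (stateval x').

(* pi is a stationary distribution of the kernel P (P x x' = P[next = x | now = x']) *)
Definition is_stationary (R : realType) (T : finType) (P : T -> T -> R) (pi : T -> R) :=
  [/\ forall x, 0 <= pi x, \sum_x pi x = 1 &
      forall x, pi x = \sum_x' P x x' * pi x'].

From HB Require Import structures.
From mathcomp Require Import all_boot all_order all_algebra.
From mathcomp Require Import reals.
From mathcomp Require Import ring zify.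

(* A(x | x') > 0 because of the term in which no forager succeeds: its binomial
   factors are (1 - phi_i)^(x'_i) > 0, and the xi unsuccessful foragers are then
   redistributed uniformly, so its multinomial factor is positive as well.  Each
   column of A sums to 1: for fixed successes v, summing the multinomial law over
   the target states gives (sum_i q_i)^(xi - R) = 1 by the multinomial theorem,
   and what remains is a product of binomial laws, which sums to 1.

   For a positive matrix P whose columns sum to 1, the positive part of a fixed
   vector of P is again fixed (it is subinvariant, and P preserves total mass),
   and a nonnegative fixed vector that is positive somewhere is positive
   everywhere.  Hence every fixed vector is either positive or nonpositive.  As
   P - 1 is singular, normalising a nonzero fixed vector gives a positive
   stationary distribution, and the difference of two stationary distributions
   is a fixed vector of total mass 0, hence 0. *)

Set Implicit Arguments.
Unset Strict Implicit.
Unset Printing Implicit Defensive.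

Import Order.TTheory GRing.Theory Num.Theory.
Local Open Scope ring_scope.

Section PositiveKernel.
Variables (R : realFieldType) (T : finType) (P : T -> T -> R).
Hypothesis P_gt0 : forall x y, 0 < P x y.
Hypothesis sum_P : forall y, \sum_x P x y = 1.

Definition fixed_vector (u : T -> R) := forall x, u x = \sum_y P x y * u y.

Lemma sum_kernel_mul (u : T -> R) : \sum_x \sum_y P x y * u y = \sum_y u y.
Proof.
by rewrite exchange_big; apply: eq_bigr => y _; rewrite -mulr_suml sum_P mul1r.
Qed.

Lemma subfixed_fixed (u : T -> R) :
  (forall x, u x <= \sum_y P x y * u y) -> fixed_vector u.
Proof.
move=> le_uPu x; apply/esym/subr0_eq.
have gap_ge0 y : predT y -> 0 <= \sum_z P y z * u z - u y by rewrite subr_ge0.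
by apply: (psumr_eq0P gap_ge0); rewrite // sumrB sum_kernel_mul subrr.
Qed.

Lemma fixed_vectorB (u w : T -> R) :
  fixed_vector u -> fixed_vector w -> fixed_vector (fun x => u x - w x).
Proof.
by move=> fu fw x; rewrite fu fw -sumrB; apply: eq_bigr => y _; rewrite mulrBr.
Qed.

Lemma fixed_vectorN (u : T -> R) : fixed_vector u -> fixed_vector (fun x => - u x).
Proof.
by move=> fu x; rewrite fu -sumrN; apply: eq_bigr => y _; rewrite mulrN.
Qed.

Lemma fixed_vector_max0 (u : T -> R) :
  fixed_vector u -> fixed_vector (fun x => Num.max (u x) 0).
Proof.
move=> fu; apply: subfixed_fixed => x; rewrite ge_max; apply/andP; split.
  rewrite fu; apply: ler_sum => y _; apply: ler_wpM2l; first exact: ltW.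
  by rewrite le_max lexx.
apply: sumr_ge0 => y _; apply: mulr_ge0; first exact: ltW.
by rewrite le_max lexx orbT.
Qed.

Lemma fixed_vector_ge0_gt0 (u : T -> R) y :
  fixed_vector u -> (forall x, 0 <= u x) -> 0 < u y -> forall x, 0 < u x.
Proof.
move=> fu u_ge0 uy_gt0 x; rewrite fu (bigD1 y) //=.
apply: ltr_pwDl; first exact: mulr_gt0.
by apply: sumr_ge0 => z _; apply: mulr_ge0; [exact: ltW | exact: u_ge0].
Qed.

Lemma fixed_vector_gt0_or_le0 (u : T -> R) :
  fixed_vector u -> (forall x, 0 < u x) \/ (forall x, u x <= 0).
Proof.
move=> fu; have fu_max0 := fixed_vector_max0 fu.
have [/existsP[y uy_gt0]|/existsPn u_le0] := boolP [exists y, 0 < Num.max (u y) 0].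
  left=> x; have := fixed_vector_ge0_gt0 fu_max0 _ uy_gt0 x.
  by rewrite lt_max ltxx orbF; apply => z; rewrite le_max lexx orbT.
by right=> x; have := u_le0 x; rewrite lt_max ltxx orbF -leNgt.
Qed.

Lemma fixed_vector_sum0 (u : T -> R) :
  fixed_vector u -> \sum_x u x = 0 -> forall x, u x = 0.
Proof.
move=> fu sum0 x; have [u_gt0|u_le0] := fixed_vector_gt0_or_le0 fu.
  exact: (psumr_eq0P (P := predT) (fun y _ => ltW (u_gt0 y)) sum0).
apply/eqP; rewrite -oppr_eq0; apply/eqP.
have N_ge0 y : predT y -> 0 <= - u y by rewrite oppr_ge0.
by apply: (psumr_eq0P N_ge0); rewrite // sumrN sum0 oppr0.
Qed.

(* The columns of [P] sum to one, so [1 *m (P - 1) = 0] and [P - 1] is singular. *)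
Lemma exists_fixed_vector_neq0 (x0 : T) : exists2 u, fixed_vector u & exists y, u y != 0.
Proof.
pose n := #|T|.
have sum_enum (F : T -> R) : \sum_(i < n) F (enum_val i) = \sum_x F x.
  by rewrite [RHS](reindex (fun i : 'I_n => enum_val i)) //; exact/onW_bij/enum_val_bij.
pose Pm : 'M[R]_n := \matrix_(i, j) P (enum_val i) (enum_val j).
have /det0P[w w_neq0] : \det (Pm - 1%:M)^T == 0.
  rewrite det_tr; apply/det0P; exists (const_mx 1).
    by apply/eqP => /matrixP/(_ 0 (enum_rank x0))/eqP; rewrite !mxE oner_eq0.
  rewrite mulmxBr mulmx1; apply/eqP; rewrite subr_eq0; apply/eqP.
  apply/matrixP => i j; rewrite !mxE.
  under eq_bigr do rewrite !mxE mul1r.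
  by rewrite (sum_enum (fun x => P x (enum_val j))) sum_P.
rewrite linearB /= trmx1 mulmxBr mulmx1 => /eqP; rewrite subr_eq0 => /eqP wPm.
exists (fun x => w 0 (enum_rank x)).
  move=> x; have /matrixP/(_ 0 (enum_rank x)) := wPm; rewrite !mxE => <-.
  rewrite -(sum_enum (fun y => P x y * w 0 (enum_rank y))).
  by apply: eq_bigr => j _; rewrite !mxE enum_valK enum_rankK mulrC.
have /existsP[j wj] : [exists j, w 0 j != 0].
  apply: contraR w_neq0; rewrite negb_exists => /forallP w0.
  by apply/eqP/matrixP => i j; rewrite ord1 mxE; exact/eqP/negbNE/w0.
by exists (enum_val j); rewrite enum_valK.
Qed.

Lemma exists_fixed_vector_gt0 (x0 : T) : exists2 u, fixed_vector u & forall x, 0 < u x.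
Proof.
have [u fu [y uy_neq0]] := exists_fixed_vector_neq0 x0.
have [u_gt0|u_le0] := fixed_vector_gt0_or_le0 fu; first by exists u.
have [Nu_gt0|Nu_le0] := fixed_vector_gt0_or_le0 (fixed_vectorN fu).
  by exists (fun x => - u x) => //; exact: fixed_vectorN.
by move: uy_neq0; rewrite eq_le u_le0 -oppr_le0 Nu_le0.
Qed.

End PositiveKernel.

Lemma positive_kernel_stationary (R : realType) (T : finType) (P : T -> T -> R) (x0 : T) :
  (forall x y, 0 < P x y) -> (forall y, \sum_x P x y = 1) ->
  exists pi : T -> R,
    [/\ is_stationary P pi,
        forall pi', is_stationary P pi' -> forall x, pi' x = pi x &
        forall x, 0 < pi x].
Proof.
move=> P_gt0 sum_P; have [u fu u_gt0] := exists_fixed_vector_gt0 P_gt0 sum_P x0.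
have sum_u_gt0 : 0 < \sum_x u x.
  by rewrite (bigD1 x0) //= ltr_pwDl ?sumr_ge0 // => x _; exact: ltW.
pose pi x := u x / \sum_y u y.
have fixed_pi : fixed_vector P pi.
  by move=> x; rewrite /pi fu mulr_suml; apply: eq_bigr => y _; rewrite mulrA.
have sum_pi : \sum_x pi x = 1 by rewrite -mulr_suml divff ?gt_eqF.
have pi_gt0 x : 0 < pi x by rewrite divr_gt0.
exists pi; split=> [|pi' [_ sum_pi' fixed_pi'] x|//]; first by split=> // x; exact: ltW.
apply: subr0_eq; move: x; apply: (fixed_vector_sum0 P_gt0 sum_P (fixed_vectorB fixed_pi' fixed_pi)).
by rewrite sumrB sum_pi' sum_pi subrr.
Qed.

Section FfunCons.
Variables (T : finType) (m : nat).

Definition ffun_cons (a : T) (g : {ffun 'I_m -> T}) : {ffun 'I_m.+1 -> T} :=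
  [ffun i => if unlift ord0 i is Some j then g j else a].

Lemma ffun_cons0 a g : ffun_cons a g ord0 = a.
Proof. by rewrite ffunE unlift_none. Qed.

Lemma ffun_consS a g j : ffun_cons a g (lift ord0 j) = g j.
Proof. by rewrite ffunE liftK. Qed.

Lemma big_ffun_cons (V : nmodType) (P : pred {ffun 'I_m.+1 -> T})
    (F : {ffun 'I_m.+1 -> T} -> V) :
  \sum_(f | P f) F f = \sum_a \sum_(g | P (ffun_cons a g)) F (ffun_cons a g).
Proof.
rewrite pair_big_dep (reindex (fun p => ffun_cons p.1 p.2)) //=.
apply: onW_bij; exists (fun f : {ffun 'I_m.+1 -> T} => (f ord0, [ffun j => f (lift ord0 j)])).
  by case=> a g; rewrite ffun_cons0; congr (_, _); apply/ffunP => j; rewrite ffunE ffun_consS.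
move=> f; apply/ffunP => i; rewrite ffunE /=.
by case: unliftP => [j ->|->]; rewrite ?ffunE.
Qed.

End FfunCons.

Lemma forall_ord_recl m (P : pred 'I_m.+1) :
  [forall i, P i] = P ord0 && [forall j, P (lift ord0 j)].
Proof.
apply/forallP/andP => [P_all|[P0 /forallP P_lift] i]; first by split=> //; apply/forallP.
by case: (unliftP ord0 i) => [j ->|->].
Qed.

Lemma forall_andb (T : finType) (P Q : pred T) :
  [forall i, P i && Q i] = [forall i, P i] && [forall i, Q i].
Proof.
apply/forallP/andP => [PQ|[/forallP P_all /forallP Q_all] i]; last by rewrite P_all Q_all.
by split; apply/forallP => i; case/andP: (PQ i).
Qed.

Lemma big_ord_shift (V : nmodType) n a (F : nat -> V) :
  \sum_(i < n | (a <= i)%N) F (i - a)%N = \sum_(j < n - a) F j.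
Proof.
rewrite -(big_mkord xpredT) (eq_bigr (fun j => F (j + a - a)%N)) => [|j _].
  by rewrite -(big_addn 0 n a predT (fun i => F (i - a)%N)) add0n big_geq_mkord.
by rewrite addnK.
Qed.

Section Multinomial.
Variable R : realType.

Lemma multinom_pmf_ge0 m N (q : 'I_m -> R) k :
  (forall i, 0 <= q i) -> 0 <= multinom_pmf N q k.
Proof.
move=> q_ge0; rewrite /multinom_pmf; case: ifP => // _.
by rewrite mulr_ge0 ?divr_ge0 // prodr_ge0 // => i _; rewrite exprn_ge0.
Qed.

Lemma multinom_pmf_gt0 m N (q : 'I_m -> R) k :
  (forall i, 0 < q i) -> (\sum_i k i = N)%N -> 0 < multinom_pmf N q k.
Proof.
move=> q_gt0 sum_k; rewrite /multinom_pmf sum_k eqxx.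
rewrite mulr_gt0 ?divr_gt0 ?ltr0n ?fact_gt0 ?prodn_gt0 // => [i|]; first exact: fact_gt0.
by rewrite prodr_gt0 // => i _; rewrite exprn_gt0.
Qed.

Lemma multinom_pmf_eq0 m N (q : 'I_m -> R) k :
  (\sum_i k i != N)%N -> multinom_pmf N q k = 0.
Proof. by move=> sum_k; rewrite /multinom_pmf ifN. Qed.

Lemma eq_multinom_pmf m N (q : 'I_m -> R) (k1 k2 : 'I_m -> nat) :
  k1 =1 k2 -> multinom_pmf N q k1 = multinom_pmf N q k2.
Proof.
move=> ek; rewrite /multinom_pmf (eq_bigr _ (fun i _ => ek i)).
by rewrite (eq_bigr _ (fun i _ => congr1 factorial (ek i)))
           (eq_bigr _ (fun i _ => congr1 _ (ek i))).
Qed.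

Lemma multinom_pmf_recl m N (q : 'I_m.+1 -> R) (k : 'I_m.+1 -> nat) :
  multinom_pmf N q k =
  if (k ord0 <= N)%N then
    q ord0 ^+ k ord0 *+ 'C(N, k ord0) *
    multinom_pmf (N - k ord0) (fun j => q (lift ord0 j)) (fun j => k (lift ord0 j))
  else 0.
Proof.
rewrite /multinom_pmf !big_ord_recl; case: leqP => [kN|Nk]; last first.
  by rewrite ifN //; apply/eqP; lia.
have -> : (k ord0 + \sum_(i < m) k (lift ord0 i) == N) =
          (\sum_(i < m) k (lift ord0 i) == N - k ord0)%N.
  by rewrite -(eqn_add2l (k ord0)) subnKC.
case: eqP => _; last by rewrite mulr0.
rewrite -(bin_fact kN) !natrM -mulr_natr.
have fact_neq0 j : j`!%:R != 0 :> R by rewrite pnatr_eq0 -lt0n fact_gt0.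
have prod_fact_neq0 : (\prod_(i < m) (k (lift ord0 i))`!)%:R != 0 :> R.
  by rewrite pnatr_eq0 -lt0n prodn_gt0 // => i; exact: fact_gt0.
by field; rewrite !fact_neq0 prod_fact_neq0.
Qed.

Lemma sum_multinom_pmf m n N (q : 'I_m -> R) (v : 'I_m -> nat) :
  (\sum_i v i + N <= n)%N ->
  \sum_(k : {ffun 'I_m -> 'I_n.+1} | [forall i, v i <= k i]%N)
     multinom_pmf N q (fun i => k i - v i)%N = (\sum_i q i) ^+ N.
Proof.
elim: m N q v => [|m IH] N q v le_vN_n.
  rewrite big_ord0 expr0n (big_pred1 [ffun=> ord0]) => [|k]; last first.
    have -> : k = [ffun=> ord0] by apply/ffunP; case.
    by rewrite /= eqxx; apply/forallP; case.
  rewrite /multinom_pmf !big_ord0.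
  by case: N {le_vN_n} => [|N]; rewrite ?divr1 ?mulr1.
pose q' (j : 'I_m) := q (lift ord0 j); pose v' (j : 'I_m) := v (lift ord0 j).
pose H j := if (j <= N)%N then q ord0 ^+ j *+ 'C(N, j) * (\sum_i q' i) ^+ (N - j) else 0.
have le_v'N_n : (v ord0 + \sum_i v' i + N <= n)%N by rewrite -big_ord_recl.
have inner (a : 'I_n.+1) :
    \sum_(g : {ffun 'I_m -> 'I_n.+1} | [forall i, v i <= ffun_cons a g i]%N)
    multinom_pmf N q (fun i => ffun_cons a g i - v i)%N =
    if (v ord0 <= a)%N then H (a - v ord0)%N else 0.
  rewrite (eq_bigl (fun g : {ffun 'I_m -> 'I_n.+1} =>
                     (v ord0 <= a) && [forall j, v' j <= g j])%N); last first.
    move=> g; rewrite forall_ord_recl ffun_cons0.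
    by congr (_ && _); apply: eq_forallb => j; rewrite ffun_consS.
  case: leqP => [le_v0a|lt_av0]; last by rewrite big_pred0 // => g; rewrite leqNgt lt_av0.
  rewrite /H; case: leqP => [le_jN|lt_Nj]; last first.
    by rewrite big1 // => g _; rewrite multinom_pmf_recl ffun_cons0 leqNgt lt_Nj.
  rewrite -(IH _ _ v'); last by move: le_v'N_n; lia.
  rewrite mulr_sumr; apply: eq_bigr => g _.
  rewrite multinom_pmf_recl ffun_cons0 le_jN; congr (_ * _).
  by apply: eq_multinom_pmf => j; rewrite ffun_consS.
rewrite big_ffun_cons (eq_bigr _ (fun a _ => inner a)) -big_mkcond big_ord_shift.
rewrite big_ord_recl addrC exprDn.
rewrite (big_ord_widen (n.+1 - v ord0)
          (fun j => (\sum_i q' i) ^+ (N - j) * q ord0 ^+ j *+ 'C(N, j))); last first.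
  by move: le_v'N_n; lia.
rewrite [RHS]big_mkcond; apply: eq_bigr => j _; rewrite /H ltnS.
by case: leqP => // _; rewrite mulrnAl mulrC.
Qed.

End Multinomial.

Section Distributions.
Variable R : realType.

Lemma phi_ge0 m (K : 'I_m -> R) i u : 0 < K i -> 0 <= u -> 0 <= phi K i u.
Proof. by move=> K_gt0 u_ge0; rewrite /phi divr_ge0 ?addr_ge0 // ltW. Qed.

Lemma phi_le1 m (K : 'I_m -> R) i u : 0 < K i -> 0 <= u -> phi K i u <= 1.
Proof. by move=> K_gt0 u_ge0; rewrite /phi ler_pdivrMr ?mul1r ?lerDl // ltr_wpDr. Qed.

Lemma phi_lt1 m (K : 'I_m -> R) i u : 0 < K i -> 0 < u -> phi K i u < 1.
Proof. by move=> K_gt0 u_gt0; rewrite /phi ltr_pdivrMr ?mul1r ?ltrDl // addr_gt0. Qed.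

Lemma binom_pmf_ge0 n k (p : R) : 0 <= p <= 1 -> 0 <= binom_pmf n k p.
Proof.
by case/andP=> p_ge0 p_le1; rewrite !mulr_ge0 ?exprn_ge0 ?subr_ge0.
Qed.

Lemma binom_pmf0 n (p : R) : binom_pmf n 0 p = (1 - p) ^+ n.
Proof. by rewrite /binom_pmf bin0 expr0 !mul1r subn0. Qed.

Lemma binom_pmf_small n k (p : R) : (n < k)%N -> binom_pmf n k p = 0.
Proof. by move=> lt_nk; rewrite /binom_pmf bin_small // !mul0r. Qed.

Lemma sum_binom_pmf n N (p : R) : (n <= N)%N -> \sum_(k < N.+1) binom_pmf n k p = 1.
Proof.
move=> le_nN; transitivity ((1 - p + p) ^+ n); last by rewrite subrK expr1n.
rewrite exprDn.
rewrite (big_ord_widen N.+1 (fun k => (1 - p) ^+ (n - k) * p ^+ k *+ 'C(n, k))) //.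
rewrite [RHS]big_mkcond; apply: eq_bigr => k _; case: ltnP => [_|le_nk].
  by rewrite /binom_pmf -mulr_natl; ring.
by rewrite binom_pmf_small.
Qed.

Lemma sum_prod_binom_pmf m N (n : 'I_m -> nat) (p : 'I_m -> R) :
  (forall i, n i <= N)%N ->
  \sum_(v : {ffun 'I_m -> 'I_N.+1} | [forall i, v i <= n i]%N)
    \prod_i binom_pmf (n i) (v i) (p i) = 1.
Proof.
pose B (v : {ffun 'I_m -> 'I_N.+1}) := \prod_i binom_pmf (n i) (v i) (p i).
move=> le_nN; rewrite big_mkcond /= (eq_bigr B) => [|v _].
  rewrite -(bigA_distr_bigA (fun i (j : 'I_N.+1) => binom_pmf (n i) j (p i))).
  by apply: big1 => i _; exact: sum_binom_pmf.
case: ifP => // /negbT/forallPn[i]; rewrite -ltnNge => lt_nv.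
by rewrite /B (bigD1 i) //= binom_pmf_small ?mul0r.
Qed.

Lemma redistrib_ge0 m (rho : R) (v : 'I_m -> nat) i :
  0 <= rho <= 1 -> 0 <= redistrib rho v i.
Proof.
case/andP=> rho_ge0 rho_le1; rewrite /redistrib; case: ifP => _; first by rewrite divr_ge0.
by rewrite addr_ge0 ?divr_ge0 ?mulr_ge0 ?subr_ge0.
Qed.

Lemma redistrib_gt0 m (rho : R) (v : 'I_m -> nat) i :
  (0 < m)%N -> (\sum_j v j = 0)%N -> 0 < redistrib rho v i.
Proof. by move=> m_gt0 sum_v; rewrite /redistrib sum_v eqxx divr_gt0 ?ltr0n. Qed.

Lemma sum_redistrib m (rho : R) (v : 'I_m -> nat) :
  (0 < m)%N -> \sum_i redistrib rho v i = 1.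
Proof.
move=> m_gt0; have m_neq0 : m%:R != 0 :> R by rewrite pnatr_eq0 -lt0n.
rewrite /redistrib; case: eqP => [_|/eqP sum_v_neq0].
  by rewrite sumr_const card_ord -[_ *+ m]mulr_natr mul1r mulVf.
rewrite big_split /= sumr_const card_ord -mulr_suml -mulr_sumr -natr_sum -[_ *+ m]mulr_natr.
have sum_v_neq0' : (\sum_j v j)%:R != 0 :> R by rewrite pnatr_eq0.
by field; rewrite m_neq0 sum_v_neq0'.
Qed.

End Distributions.

Section Transition.
Variables (R : realType) (m xi : nat) (K : 'I_m -> R) (rho : R).
Hypotheses (m_gt0 : (0 < m)%N) (xi_gt0 : (0 < xi)%N) (K_gt0 : forall i, 0 < K i).
Hypothesis rho01 : 0 <= rho <= 1.

Lemma trans_gt0 (x x' : 'I_m -> nat) : (\sum_i x i = xi)%N -> 0 < trans xi K rho x x'.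
Proof.
move=> sum_x; pose v0 : {ffun 'I_m -> 'I_xi.+1} := [ffun=> ord0].
have v0E i : (v0 i : nat) = 0%N by rewrite ffunE.
have sum_v0 : (\sum_i (v0 i : nat) = 0)%N by rewrite big1.
have p_ge0 i : 0 <= (x' i)%:R / xi%:R :> R by rewrite divr_ge0.
rewrite /trans (bigD1 v0) /=; last by apply/forallP => i; rewrite v0E.
apply: ltr_pwDl; last first.
  apply: sumr_ge0 => v _; apply: mulr_ge0.
    by apply: prodr_ge0 => i _; rewrite binom_pmf_ge0 // phi_ge0 ?phi_le1.
  by apply: multinom_pmf_ge0 => i; exact: redistrib_ge0.
rewrite mulr_gt0 //.
  apply: prodr_gt0 => i _; rewrite v0E binom_pmf0.
  case x'_i: (x' i) => [|n]; first by rewrite expr0 ltr01.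
  by rewrite exprn_gt0 // subr_gt0 phi_lt1 // divr_gt0 ?ltr0n ?x'_i.
rewrite multinom_pmf_gt0 // => [i|]; first exact: redistrib_gt0.
by rewrite sum_v0 subn0 (eq_bigr x) // => i _; rewrite v0E subn0.
Qed.

Lemma sum_multinom_redistrib (v : 'I_m -> nat) : (\sum_i v i <= xi)%N ->
  \sum_(x : {ffun 'I_m -> 'I_xi.+1} | ((\sum_i (x i : nat) == xi) && [forall i, v i <= x i])%N)
    multinom_pmf (xi - \sum_i v i) (redistrib rho v) (fun i => x i - v i)%N = 1.
Proof.
move=> le_v_xi; rewrite -(expr1n _ (xi - \sum_i v i)) -(sum_redistrib rho v m_gt0).
rewrite -(sum_multinom_pmf _ (n := xi) (v := v)) ?subnKC //.
rewrite big_mkcondl; apply: eq_bigr => x /forallP le_vx; case: eqP => // /eqP sum_x.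
have le_v_x : (\sum_i v i <= \sum_i (x i : nat))%N by apply: leq_sum => i _; exact: le_vx.
rewrite multinom_pmf_eq0 // sumnB => [|i _]; last exact: le_vx.
by rewrite -(eqn_add2r (\sum_i v i)) !subnK.
Qed.

Lemma sum_trans (x' : 'I_m -> nat) : (\sum_i x' i = xi)%N ->
  \sum_(x : {ffun 'I_m -> 'I_xi.+1} | (\sum_i (x i : nat) == xi)%N)
     trans xi K rho (fun i => x i) x' = 1.
Proof.
move=> sum_x'; have le_x'_xi i : (x' i <= xi)%N by rewrite -sum_x' (bigD1 i) //= leq_addr.
rewrite -(sum_prod_binom_pmf (fun i => phi K i ((x' i)%:R / xi%:R)) le_x'_xi).
rewrite (exchange_big_dep (fun v : {ffun 'I_m -> 'I_xi.+1} => [forall i, v i <= x' i]%N)) /=;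
  last by move=> x v _; rewrite forall_andb => /andP[].
apply: eq_bigr => v Vv; rewrite -mulr_sumr -[RHS]mulr1; congr (_ * _).
have le_v_xi : (\sum_i (v i : nat) <= xi)%N.
  apply: (leq_trans _ (eq_leq sum_x')); apply: leq_sum => i _; exact: (forallP Vv).
rewrite -(sum_multinom_redistrib le_v_xi); apply: eq_bigl => x.
by rewrite (forall_andb (fun i => v i <= x' i)%N) Vv.
Qed.

End Transition.

Lemma sum_state (R : realType) m xi (F : {ffun 'I_m -> 'I_xi.+1} -> R) :
  \sum_(x : state m xi) F (val x) =
  \sum_(f : {ffun 'I_m -> 'I_xi.+1} | (\sum_i (f i : nat) == xi)%N) F f.
Proof.
exact: esym (big_sub [pred f : {ffun 'I_m -> 'I_xi.+1} | (\sum_i (f i : nat) == xi)%N] F).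
Qed.

Definition point_state m xi (i0 : 'I_m) : {ffun 'I_m -> 'I_xi.+1} :=
  [ffun i => if i == i0 then ord_max else ord0].

Lemma sum_point_state m xi (i0 : 'I_m) : (\sum_i (point_state xi i0 i : nat) == xi)%N.
Proof.
rewrite (bigD1 i0) //= big1 => [|i /negbTE i_neq0]; last by rewrite ffunE i_neq0.
by rewrite ffunE eqxx addn0.
Qed.

Theorem mainTheorem4 (R : realType) (m xi : nat) (K : 'I_m -> R) (rho : R) :
  (0 < m)%N -> (0 < xi)%N -> (forall i, 0 < K i) -> 0 <= rho <= 1 ->
  (forall x x' : state m xi, 0 < A K rho x x') /\
  exists pi : state m xi -> R,
    [/\ is_stationary (A K rho) pi,
        (forall pi' : state m xi -> R, is_stationary (A K rho) pi' ->
           forall x, pi' x = pi x) &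
        forall x, 0 < pi x].
Proof.
move=> m_gt0 xi_gt0 K_gt0 rho01.
have A_gt0 (x x' : state m xi) : 0 < A K rho x x'.
  exact: trans_gt0 (eqP (valP x)).
have sum_A (x' : state m xi) : \sum_x A K rho x x' = 1.
  rewrite (sum_state (fun f => trans xi K rho (fun i => f i) (stateval x'))).
  exact: sum_trans (eqP (valP x')).
pose x0 : state m xi := exist _ (point_state xi (Ordinal m_gt0)) (sum_point_state _ _).
by split=> //; exact: positive_kernel_stationary x0 A_gt0 sum_A.
Qed.
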